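(* Let $(p,\mathcal D,L)$ be a Hadamard triple on $\mathbb R$ with $p>1$, $0\in\mathcal D\subset\{0,1,2,\dots\}$ and $0\in L\subset\{0,1,\dots,p-1\}$. Then $(p,\mathcal D)$ satisfies DPC if and only if $p>\#\mathcal D$.
   Context: A Hadamard triple on $\mathbb R$ is a triple $(p,\mathcal D,L)$ with $p>1$ an integer, $\mathcal D,L\subset\mathbb Z$ finite with $\#\mathcal D=\#L$, such that $\frac{1}{\sqrt{\#\mathcal D}}\big[e^{2\pi i d\ell/p}\big]_{\ell\in L,d\in\mathcal D}$ is unitary. For finite $A\subset\mathbb R$, $\widehat{\delta_{cA}}(\xi)=\frac1{\#A}\sum_{a\in A}e^{2\pi i ca\xi}$. $T_{p,D}$ denotes the set of $\xi\in[0,1)$ for which there exist distinct $\ell_1,\ell_2\in\{0,\dots,p-1\}$ with $\widehat{\delta_{p^{-1}D}}(\xi+\ell_i)\ne0$, $i=1,2$; $(p,D)$ satisfies the Double Points Condition (DPC) if $T_{p,D}=[0,1)$. *)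

From Stdlib Require Import Reals ZArith List.
From Coquelicot Require Import Coquelicot.
Open Scope R_scope.

Definition csum {A : Type} (f : A -> C) (l : list A) : C :=
  fold_right (fun x acc => Cplus (f x) acc) (RtoC 0) l.

Definition expi2pi (x : R) : C := (cos (2 * PI * x), sin (2 * PI * x)).

Definition cdelta (a b : Z) : C := if Z.eq_dec a b then RtoC 1 else RtoC 0.

Definition hmat (p : Z) (D : list Z) (l d : Z) : C :=
  Cmult (RtoC (/ sqrt (INR (length D)))) (expi2pi (IZR d * IZR l / IZR p)).

Definition unitary_hmat (p : Z) (D L : list Z) : Prop :=
  (forall l1 l2, In l1 L -> In l2 L ->
     csum (fun d => Cmult (hmat p D l1 d) (Cconj (hmat p D l2 d))) D = cdelta l1 l2) /\
  (forall d1 d2, In d1 D -> In d2 D ->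
     csum (fun l => Cmult (Cconj (hmat p D l d1)) (hmat p D l d2)) L = cdelta d1 d2).

(* Hadamard triple (p, D, L) on R; finite sets of integers are duplicate-free lists. *)
Definition hadamard_triple (p : Z) (D L : list Z) : Prop :=
  (1 < p)%Z /\ NoDup D /\ NoDup L /\ length D = length L /\ unitary_hmat p D L.

Definition delta_hat (c : R) (A : list Z) (xi : R) : C :=
  Cmult (RtoC (/ INR (length A))) (csum (fun a => expi2pi (c * IZR a * xi)) A).

Definition T_set (p : Z) (D : list Z) (xi : R) : Prop :=
  0 <= xi < 1 /\
  exists l1 l2 : Z, (0 <= l1 <= p - 1)%Z /\ (0 <= l2 <= p - 1)%Z /\ l1 <> l2 /\
    delta_hat (/ IZR p) D (xi + IZR l1) <> RtoC 0 /\
    delta_hat (/ IZR p) D (xi + IZR l2) <> RtoC 0.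

Definition DPC (p : Z) (D : list Z) : Prop :=
  forall xi : R, T_set p D xi <-> 0 <= xi < 1.

From Stdlib Require Import Reals ZArith List Lia Lra Classical.
From Coquelicot Require Import Coquelicot.
Open Scope R_scope.

(* Write e(x) = exp(2 pi i x).  Unitarity of the matrix [e(d l / p)] / sqrt #D gives:
   - (columns) distinct digits of D are distinct modulo p;
   - (rows) for l in L, l <> 0, the digit sum sum_{d in D} e(d l / p) vanishes
     (orthogonality of row l against row 0).
   Moreover #D = #L <= p, since L is a set of residues in {0, ..., p-1}.
   If #D = p then L = {0, ..., p-1}, so at xi = 0 only l = 0 gives a nonzero value
   of delta_hat, and DPC fails.  If #D < p, some residue r mod p is missed by D.  For
   fixed xi, let F(l) = sum_{d in D} e(d (xi + l) / p).  By orthogonality of the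
   characters of Z/pZ, its 0-th Fourier coefficient equals p <> 0 while its r-th
   one vanishes; a function on Z/pZ with these two properties has at least two
   nonzero values, which is DPC at xi. *)

Section ListSums.

Context {A : Type}.

Lemma csum_ext (f g : A -> C) (l : list A) :
  (forall x, In x l -> f x = g x) -> csum f l = csum g l.
Proof.
  induction l as [|a l IH]; intros Hfg; simpl; [reflexivity|].
  rewrite Hfg by (left; reflexivity).
  rewrite IH by (intros x Hx; apply Hfg; right; exact Hx).
  reflexivity.
Qed.

Lemma csum_scal_l (c : C) (f : A -> C) (l : list A) :
  (c * csum f l)%C = csum (fun x => c * f x)%C l.
Proof. induction l as [|a l IH]; simpl; [ring|]. rewrite <- IH; ring. Qed.

Lemma csum_scal_r (c : C) (f : A -> C) (l : list A) :
  (csum f l * c)%C = csum (fun x => f x * c)%C l.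
Proof. induction l as [|a l IH]; simpl; [ring|]. rewrite <- IH; ring. Qed.

Lemma csum_plus (f g : A -> C) (l : list A) :
  csum (fun x => f x + g x)%C l = (csum f l + csum g l)%C.
Proof. induction l as [|a l IH]; simpl; [ring|]. rewrite IH; ring. Qed.

Lemma csum_const (c : C) (l : list A) :
  csum (fun _ => c) l = (INR (length l) * c)%C.
Proof.
  induction l as [|a l IH]; simpl length; [simpl; ring|].
  rewrite S_INR, RtoC_plus. simpl. rewrite IH. ring.
Qed.

Lemma csum_zero (f : A -> C) (l : list A) :
  (forall x, In x l -> f x = 0) -> csum f l = 0.
Proof.
  intros Hf. rewrite (csum_ext f (fun _ => RtoC 0)) by exact Hf.
  rewrite csum_const. ring.
Qed.

Lemma csum_single (f : A -> C) (l : list A) (a : A) :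
  NoDup l -> In a l -> (forall x, In x l -> x <> a -> f x = 0) -> csum f l = f a.
Proof.
  induction l as [|b l IH]; intros Hnd Ha Hf; [destruct Ha|].
  inversion Hnd as [|? ? Hb Hnd']; subst. simpl.
  destruct Ha as [<- | Ha].
  - rewrite csum_zero; [ring|].
    intros x Hx; apply Hf; [right; exact Hx | intros ->; contradiction].
  - rewrite (Hf b) by first [left; reflexivity | intros ->; contradiction].
    rewrite IH; [ring | exact Hnd' | exact Ha |].
    intros x Hx; apply Hf; right; exact Hx.
Qed.

Lemma csum_neq0_term (f : A -> C) (l : list A) :
  csum f l <> 0 -> exists x, In x l /\ f x <> 0.
Proof.
  intros Hs. apply NNPP; intros Hno. apply Hs, csum_zero.
  intros x Hx. apply NNPP; intros Hfx. apply Hno; exists x; split; assumption.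
Qed.

Lemma two_nonzero_terms (f u v : A -> C) (l : list A) :
  NoDup l -> (forall x, v x <> 0) ->
  csum (fun x => f x * u x)%C l <> 0 -> csum (fun x => f x * v x)%C l = 0 ->
  exists x y, In x l /\ In y l /\ x <> y /\ f x <> 0 /\ f y <> 0.
Proof.
  intros Hnd Hv Hu Hv0.
  destruct (csum_neq0_term _ _ Hu) as (x & Hx & Hfux).
  assert (Hfx : f x <> 0) by (intros E; apply Hfux; rewrite E; ring).
  apply NNPP; intros Hno.
  apply (Cmult_neq_0 (f x) (v x) Hfx (Hv x)).
  rewrite <- Hv0. symmetry.
  apply (csum_single (fun x => f x * v x)%C); [exact Hnd | exact Hx |].
  intros y Hy Hyx.
  assert (Hfy : f y = 0).
  { apply NNPP; intros Hfy. apply Hno. exists x, y. auto. }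
  rewrite Hfy; ring.
Qed.

End ListSums.

Lemma csum_swap {A B : Type} (f : A -> B -> C) (l1 : list A) (l2 : list B) :
  csum (fun x => csum (f x) l2) l1 = csum (fun y => csum (fun x => f x y) l1) l2.
Proof.
  induction l1 as [|a l1 IH]; simpl.
  - symmetry; apply csum_zero; reflexivity.
  - rewrite IH, <- csum_plus. reflexivity.
Qed.

Lemma Cmult_eq0_r (a s : C) : a <> 0 -> (a * s)%C = 0 -> s = 0.
Proof.
  intros Ha E.
  rewrite <- (Cmult_1_l s), <- (Cinv_l a Ha), <- Cmult_assoc, E. ring.
Qed.

Lemma expi2pi_add (a b : R) : expi2pi (a + b) = (expi2pi a * expi2pi b)%C.
Proof.
  unfold expi2pi, Cmult; simpl.
  replace (2 * PI * (a + b)) with (2 * PI * a + 2 * PI * b) by ring.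
  rewrite cos_plus, sin_plus. f_equal; ring.
Qed.

Lemma expi2pi_int (n : Z) : expi2pi (IZR n) = 1.
Proof.
  assert (Hs : sin (PI * IZR n) = 0) by (apply sin_eq_0_1; exists n; ring).
  unfold expi2pi, RtoC. f_equal.
  - replace (2 * PI * IZR n) with (2 * (PI * IZR n)) by ring.
    rewrite cos_2a_sin, Hs. ring.
  - apply sin_eq_0_1. exists (2 * n)%Z. rewrite mult_IZR. ring.
Qed.

Lemma expi2pi_neq0 (a : R) : expi2pi a <> 0.
Proof.
  intros E.
  assert (Hinv : (expi2pi a * expi2pi (- a))%C = 1).
  { rewrite <- expi2pi_add, Rplus_opp_r. exact (expi2pi_int 0). }
  rewrite E, Cmult_0_l in Hinv. exact (C1_nz (eq_sym Hinv)).
Qed.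

Lemma expi2pi_eq1 (a : R) : expi2pi a = 1 -> exists k : Z, a = IZR k.
Proof.
  unfold expi2pi, RtoC. intros E. injection E as Hc _.
  replace (2 * PI * a) with (2 * (PI * a)) in Hc by ring.
  rewrite cos_2a_sin in Hc.
  assert (Hs : sin (PI * a) = 0) by nra.
  destruct (sin_eq_0_0 _ Hs) as [k Hk]. exists k.
  pose proof PI_RGT_0. apply Rmult_eq_reg_l with PI; lra.
Qed.

Lemma expi2pi_conj (a : R) : Cconj (expi2pi a) = expi2pi (- a).
Proof.
  unfold expi2pi, Cconj; simpl.
  replace (2 * PI * - a) with (- (2 * PI * a)) by ring.
  rewrite cos_neg, sin_neg. reflexivity.
Qed.

Fixpoint zrange (n : nat) : list Z :=
  match n with O => nil | S m => Z.of_nat m :: zrange m end.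

Lemma In_zrange (n : nat) (k : Z) : In k (zrange n) <-> (0 <= k < Z.of_nat n)%Z.
Proof. induction n as [|n IH]; simpl; [|rewrite IH]; lia. Qed.

Lemma NoDup_zrange (n : nat) : NoDup (zrange n).
Proof.
  induction n as [|n IH]; simpl; constructor; [|exact IH].
  rewrite In_zrange. lia.
Qed.

Lemma length_zrange (n : nat) : length (zrange n) = n.
Proof. induction n as [|n IH]; simpl; congruence. Qed.

Lemma geometric_sum (t : R) (n : nat) :
  ((expi2pi t - 1) * csum (fun l => expi2pi (t * IZR l)) (zrange n))%C
  = (expi2pi (t * IZR (Z.of_nat n)) - 1)%C.
Proof.
  induction n as [|n IH]; simpl zrange.
  - rewrite Rmult_0_r, (expi2pi_int 0). simpl. ring.
  - rewrite Nat2Z.inj_succ, succ_IZR, Rmult_plus_distr_l, Rmult_1_r, Rplus_comm,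
      expi2pi_add.
    change (csum ?f (?x :: ?l)) with (f x + csum f l)%C.
    rewrite Cmult_plus_distr_l, IH. ring.
Qed.

Lemma char_sum_vanish (p k : Z) : (0 < p)%Z -> ~ (p | k)%Z ->
  csum (fun l => expi2pi (IZR k * IZR l / IZR p)) (zrange (Z.to_nat p)) = 0.
Proof.
  intros Hp Hk. assert (Hp0 : IZR p <> 0) by (apply not_0_IZR; lia).
  set (t := IZR k / IZR p).
  rewrite (csum_ext _ (fun l => expi2pi (t * IZR l)))
    by (intros l _; unfold t; f_equal; field; exact Hp0).
  assert (Ht : expi2pi t <> 1).
  { intros E. destruct (expi2pi_eq1 _ E) as [j Hj]. apply Hk. exists j.
    apply eq_IZR. rewrite mult_IZR, <- Hj. unfold t. field. exact Hp0. }
  pose proof (geometric_sum t (Z.to_nat p)) as G.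
  rewrite Z2Nat.id in G by lia.
  replace (t * IZR p) with (IZR k) in G by (unfold t; field; exact Hp0).
  rewrite expi2pi_int in G.
  apply (Cmult_eq0_r _ _ (Cminus_eq_contra _ _ Ht)). rewrite G. ring.
Qed.

Lemma char_sum_trivial (p : Z) : (0 < p)%Z ->
  csum (fun l => expi2pi (IZR 0 * IZR l / IZR p)) (zrange (Z.to_nat p)) = IZR p.
Proof.
  intros Hp.
  rewrite (csum_ext _ (fun _ => RtoC 1)).
  - rewrite csum_const, length_zrange, INR_IZR_INZ, Z2Nat.id by lia. ring.
  - intros l _. unfold Rdiv. rewrite !Rmult_0_l. exact (expi2pi_int 0).
Qed.

Lemma Cconj_RtoC (r : R) : Cconj (RtoC r) = RtoC r.
Proof. unfold Cconj, RtoC; simpl. rewrite Ropp_0. reflexivity. Qed.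

Lemma hmat_conj_mult (p : Z) (D : list Z) (l d l' d' : Z) :
  (Cconj (hmat p D l d) * hmat p D l' d')%C
  = (RtoC (/ INR (length D))
     * expi2pi (IZR d' * IZR l' / IZR p - IZR d * IZR l / IZR p))%C.
Proof.
  unfold hmat, Rminus.
  rewrite Cmult_conj, Cconj_RtoC, expi2pi_conj, expi2pi_add.
  replace (/ INR (length D))
    with (/ sqrt (INR (length D)) * / sqrt (INR (length D)))
    by (rewrite <- Rinv_mult, sqrt_sqrt by apply pos_INR; reflexivity).
  rewrite RtoC_mult. ring.
Qed.

Lemma length_neq0_of_In {A : Type} (l : list A) (x : A) : In x l -> length l <> 0%nat.
Proof. intros Hx E. apply length_zero_iff_nil in E. rewrite E in Hx. destruct Hx. Qed.

Lemma inv_length_neq0 {A : Type} (l : list A) :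
  length l <> 0%nat -> RtoC (/ INR (length l)) <> 0.
Proof.
  intros Hl E. apply RtoC_inj in E. revert E.
  apply Rinv_neq_0_compat, not_0_INR. exact Hl.
Qed.

(* Unnormalised transform of the digit set: digit_sum p D x = sum_{d in D} e(d x / p),
   so that delta_hat (1/p) D x = digit_sum p D x / #D. *)
Definition digit_sum (p : Z) (D : list Z) (x : R) : C :=
  csum (fun d => expi2pi (/ IZR p * IZR d * x)) D.

Lemma delta_hat_neq0 (p : Z) (D : list Z) (x : R) : length D <> 0%nat ->
  delta_hat (/ IZR p) D x <> 0 <-> digit_sum p D x <> 0.
Proof.
  intros HD. unfold delta_hat. fold (digit_sum p D x). split.
  - intros Hdelta E. apply Hdelta. rewrite E. ring.
  - intros Hsum. exact (Cmult_neq_0 _ _ (inv_length_neq0 D HD) Hsum).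
Qed.

Section HadamardTriple.

Variables (p : Z) (D L : list Z).
Hypothesis HT : hadamard_triple p D L.
Hypothesis HL : forall l, In l L -> (0 <= l <= p - 1)%Z.

Lemma hadamard_p_pos : (0 < p)%Z.
Proof. destruct HT as [Hp _]. lia. Qed.

(* Orthogonality of two columns d1 <> d2 forces d1 and d2 to be distinct modulo p:
   otherwise every term of their inner product equals 1/#D and the sum is #L/#D = 1. *)
Lemma hadamard_distinct_residues (d1 d2 : Z) :
  In d1 D -> In d2 D -> d1 <> d2 -> ~ (p | d1 - d2)%Z.
Proof.
  intros H1 H2 Hne [m Hm].
  pose proof hadamard_p_pos as Hp.
  destruct HT as (_ & _ & _ & Hlen & _ & Hcol).
  specialize (Hcol d1 d2 H1 H2). unfold cdelta in Hcol.
  destruct (Z.eq_dec d1 d2) as [E|_]; [contradiction|].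
  assert (Hp0 : IZR p <> 0) by (apply not_0_IZR; lia).
  rewrite (csum_ext _ (fun _ => RtoC (/ INR (length D)))) in Hcol.
  - rewrite csum_const, <- Hlen, <- RtoC_mult, Rinv_r in Hcol.
    + exact (C1_nz Hcol).
    + apply not_0_INR, (length_neq0_of_In D d1 H1).
  - intros l _. rewrite hmat_conj_mult.
    replace (IZR d2 * IZR l / IZR p - IZR d1 * IZR l / IZR p) with (IZR (- (m * l)))
      by (replace d2 with (d1 - m * p)%Z by lia;
          rewrite opp_IZR, minus_IZR, !mult_IZR; field; exact Hp0).
    rewrite expi2pi_int. ring.
Qed.

(* Orthogonality of row l <> 0 to row 0 says that the digit sum vanishes at l. *)
Lemma hadamard_digit_sum_vanish (l : Z) :
  In 0%Z L -> In l L -> l <> 0%Z -> digit_sum p D (0 + IZR l) = 0.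
Proof.
  intros H0L Hl Hl0.
  pose proof hadamard_p_pos as Hp.
  assert (Hp0 : IZR p <> 0) by (apply not_0_IZR; lia).
  destruct HT as (_ & _ & _ & Hlen & Hrow & _).
  specialize (Hrow l 0%Z Hl H0L). unfold cdelta in Hrow.
  destruct (Z.eq_dec l 0) as [E|_]; [contradiction|].
  assert (HD : length D <> 0%nat) by (rewrite Hlen; exact (length_neq0_of_In L l Hl)).
  apply (Cmult_eq0_r _ _ (inv_length_neq0 D HD)).
  unfold digit_sum. rewrite csum_scal_l, <- Hrow. apply csum_ext.
  intros d _. rewrite (Cmult_comm (hmat p D l d)), hmat_conj_mult.
  do 2 f_equal. simpl. field. exact Hp0.
Qed.

(* Since L consists of #D distinct residues in {0, ..., p-1}, #D <= p ... *)
Lemma hadamard_card_le : (Z.of_nat (length D) <= p)%Z.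
Proof.
  pose proof hadamard_p_pos as Hp.
  destruct HT as (_ & _ & HnL & Hlen & _).
  assert (Hincl : incl L (zrange (Z.to_nat p))).
  { intros l Hl. apply In_zrange. specialize (HL l Hl). lia. }
  pose proof (NoDup_incl_length HnL Hincl) as Hle.
  rewrite length_zrange in Hle. lia.
Qed.

Lemma hadamard_full_spectrum :
  Z.of_nat (length D) = p -> incl (zrange (Z.to_nat p)) L.
Proof.
  intros Hcard.
  destruct HT as (_ & _ & HnL & Hlen & _).
  apply NoDup_length_incl; [exact HnL | rewrite length_zrange; lia |].
  intros l Hl. apply In_zrange. specialize (HL l Hl). lia.
Qed.

End HadamardTriple.

(* Fourier inversion over Z/pZ: the r-th Fourier coefficient of l |-> digit_sum at xi + l
   is sum_{d in D} e(d xi / p) times the character sum of d - r. *)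
Lemma digit_sum_fourier (p : Z) (D ls : list Z) (xi : R) (r : Z) : IZR p <> 0 ->
  csum (fun l => digit_sum p D (xi + IZR l) * expi2pi (- (IZR r * IZR l / IZR p)))%C ls
  = csum (fun d => expi2pi (IZR d * xi / IZR p)
                   * csum (fun l => expi2pi (IZR (d - r) * IZR l / IZR p)) ls)%C D.
Proof.
  intros Hp0. unfold digit_sum.
  rewrite (csum_ext _ (fun l => csum (fun d => expi2pi (/ IZR p * IZR d * (xi + IZR l))
                                  * expi2pi (- (IZR r * IZR l / IZR p)))%C D))
    by (intros l _; apply csum_scal_r).
  rewrite csum_swap. apply csum_ext; intros d _.
  rewrite csum_scal_l. apply csum_ext; intros l _.
  rewrite <- !expi2pi_add. f_equal. rewrite minus_IZR. field. exact Hp0.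
Qed.

(* Pigeonhole: fewer than p digits leave some residue class modulo p unoccupied. *)
Lemma missing_residue (p : Z) (D : list Z) :
  (0 < p)%Z -> (Z.of_nat (length D) < p)%Z ->
  exists r, In r (zrange (Z.to_nat p)) /\ forall d, In d D -> ~ (p | d - r)%Z.
Proof.
  intros Hp Hlt. apply NNPP; intros Hno.
  assert (Hcover : incl (zrange (Z.to_nat p)) (map (fun d => d mod p)%Z D)).
  { intros r Hr. apply in_map_iff, NNPP; intros Hnr.
    apply Hno. exists r. split; [exact Hr|].
    intros d Hd [q Hq]. apply Hnr. exists d. split; [|exact Hd].
    apply In_zrange in Hr. rewrite Z2Nat.id in Hr by lia.
    replace d with (r + q * p)%Z by lia.
    rewrite Z_mod_plus_full. apply Z.mod_small. lia. }
  pose proof (NoDup_incl_length (NoDup_zrange _) Hcover) as Hle.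
  rewrite length_zrange, length_map in Hle. lia.
Qed.

(* If #D < p, pick an unoccupied residue r.  The 0-th Fourier coefficient of
   l |-> digit_sum at xi + l equals p (the digits are distinct mod p and 0 is
   a digit), while the r-th one vanishes; hence two of the values are nonzero. *)
Lemma DPC_of_card_lt (p : Z) (D L : list Z) :
  hadamard_triple p D L -> In 0%Z D -> (Z.of_nat (length D) < p)%Z -> DPC p D.
Proof.
  intros HT H0D Hlt xi. split; [intros [Hxi _]; exact Hxi|]. intros Hxi.
  pose proof (hadamard_p_pos p D L HT) as Hp.
  assert (Hp0 : IZR p <> 0) by (apply not_0_IZR; lia).
  destruct (missing_residue p D Hp Hlt) as (r & _ & Hr).
  destruct (two_nonzero_terms (fun l => digit_sum p D (xi + IZR l))
              (fun l => expi2pi (- (IZR 0 * IZR l / IZR p)))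
              (fun l => expi2pi (- (IZR r * IZR l / IZR p)))
              (zrange (Z.to_nat p)))
    as (l1 & l2 & H1 & H2 & H12 & F1 & F2).
  - apply NoDup_zrange.
  - intros l. apply expi2pi_neq0.
  - rewrite digit_sum_fourier by exact Hp0.
    pose proof HT as (_ & HnD & _).
    rewrite (csum_single _ _ 0%Z HnD H0D).
    + change (0 - 0)%Z with 0%Z. rewrite char_sum_trivial by exact Hp.
      apply Cmult_neq_0; [apply expi2pi_neq0|].
      intros E. exact (Hp0 (RtoC_inj _ _ E)).
    + intros d Hd Hd0.
      rewrite char_sum_vanish; [ring | exact Hp |].
      exact (hadamard_distinct_residues p D L HT d 0 Hd H0D Hd0).
  - rewrite digit_sum_fourier by exact Hp0.
    apply csum_zero. intros d Hd.
    rewrite char_sum_vanish; [ring | exact Hp | exact (Hr d Hd)].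
  - apply In_zrange in H1, H2. rewrite Z2Nat.id in H1, H2 by lia.
    split; [exact Hxi|]. exists l1, l2.
    rewrite !delta_hat_neq0 by exact (length_neq0_of_In D 0%Z H0D).
    repeat split; (lia || assumption).
Qed.

(* If #D = p, then L consists of all residues, and by row orthogonality against the
   row of 0 the transform vanishes at every nonzero l: DPC fails at xi = 0. *)
Lemma not_DPC_of_card_eq (p : Z) (D L : list Z) :
  hadamard_triple p D L -> In 0%Z D -> In 0%Z L ->
  (forall l, In l L -> (0 <= l <= p - 1)%Z) ->
  Z.of_nat (length D) = p -> ~ DPC p D.
Proof.
  intros HT H0D H0L HL Hcard HDPC.
  destruct (proj2 (HDPC 0) ltac:(lra)) as (_ & l1 & l2 & H1 & H2 & H12 & N1 & N2).
  pose proof (hadamard_full_spectrum p D L HT HL Hcard) as Hfull.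
  assert (Hzero : forall l, (0 <= l <= p - 1)%Z ->
                    delta_hat (/ IZR p) D (0 + IZR l) <> 0 -> l = 0%Z).
  { intros l Hl Hnz.
    apply delta_hat_neq0 in Hnz; [|exact (length_neq0_of_In D 0%Z H0D)].
    destruct (Z.eq_dec l 0) as [E|Hl0]; [exact E|]. exfalso.
    apply Hnz, (hadamard_digit_sum_vanish p D L HT); [exact H0L | | exact Hl0].
    apply Hfull, In_zrange. lia. }
  apply H12. rewrite (Hzero l1 H1 N1), (Hzero l2 H2 N2). reflexivity.
Qed.

(* DPC holds exactly when p > #D: the case #D = p is excluded by the previous lemma,
   and #D > p is impossible for a Hadamard triple. *)
Theorem lemma3p2 (p : Z) (D L : list Z) :
  hadamard_triple p D L ->
  In 0%Z D -> (forall d, In d D -> (0 <= d)%Z) ->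
  In 0%Z L -> (forall l, In l L -> (0 <= l <= p - 1)%Z) ->
  (DPC p D <-> (Z.of_nat (length D) < p)%Z).
Proof.
  intros HT H0D _ H0L HL. split.
  - intros HDPC.
    destruct (Z.eq_dec (Z.of_nat (length D)) p) as [Hcard|Hcard].
    + exfalso. exact (not_DPC_of_card_eq p D L HT H0D H0L HL Hcard HDPC).
    + pose proof (hadamard_card_le p D L HT HL). lia.
  - exact (DPC_of_card_lt p D L HT H0D).
Qed.
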